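(* Let $M$ be a monoid, $e\in M$ an idempotent, and $\mathfrak m\subseteq M$ a two-sided ideal with $\mathfrak m=\mathfrak m^2$. Then $\mathsf p_{Me}\pitchfork\mathbf{Sh}(\mathcal F_{\mathfrak m})$ if and only if $e\in\mathfrak m$.
   Context: $Me$ is a filtered left $M$-set; $\mathsf p_{Me}$ is the corresponding point of the topos of right $M$-sets, with direct image $\mathsf p_*(S)=\mathrm{Hom}_{\mathrm{Sets}}(Me,S)$, right action $(\alpha m)(a)=\alpha(ma)$. $\mathfrak m^2=\{xy\mid x,y\in\mathfrak m\}$. $\mathcal F_{\mathfrak m}$ is the Grothendieck topology consisting of all right ideals of $M$ containing $\mathfrak m$. A right $M$-set $X$ is an $\mathcal F_{\mathfrak m}$-sheaf if for every $\mathfrak a\in\mathcal F_{\mathfrak m}$ the map $X\to\mathrm{Hom}_M(\mathfrak a,X)$, $x\mapsto(y\mapsto xy)$, is a bijection; $\mathbf{Sh}(\mathcal F_{\mathfrak m})$ is the full subcategory of such sheaves. For a point $\mathsf p$, $\mathsf p\pitchfork\mathscr T$ means $\mathsf p_*(S)\in\mathscr T$ for every set $S$. *)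

Record Monoid := {
  mcar :> Type;
  mmul : mcar -> mcar -> mcar;
  mone : mcar;
  mmulA : forall x y z, mmul x (mmul y z) = mmul (mmul x y) z;
  mmul1l : forall x, mmul mone x = x;
  mmul1r : forall x, mmul x mone = x
}.

Arguments mmul {m}.
Arguments mone {m}.

Section Defs.
Variable M : Monoid.

Definition idempotent (e : M) : Prop := mmul e e = e.

Definition right_ideal (a : M -> Prop) : Prop :=
  forall x n, a x -> a (mmul x n).
Definition left_ideal (a : M -> Prop) : Prop :=
  forall x n, a x -> a (mmul n x).
Definition two_sided_ideal (a : M -> Prop) : Prop :=
  right_ideal a /\ left_ideal a.

Definition sqset (m : M -> Prop) : M -> Prop :=
  fun z => exists x y, m x /\ m y /\ z = mmul x y.

Definition is_right_action (X : Type) (act : X -> M -> X) : Prop :=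
  (forall x, act x mone = x) /\
  (forall x n k, act (act x n) k = act x (mmul n k)).

Definition is_hom_from (a : M -> Prop) (X : Type) (act : X -> M -> X)
  (f : {y : M | a y} -> X) : Prop :=
  forall y (py : a y) n (pyn : a (mmul y n)),
    f (exist _ (mmul y n) pyn) = act (f (exist _ y py)) n.

Definition in_F (m : M -> Prop) (a : M -> Prop) : Prop :=
  right_ideal a /\ (forall z, m z -> a z).

(* X is an F_m-sheaf: for every a in F_m, x |-> (y |-> x y) is a bijection
   X -> Hom_M(a, X). *)
Definition is_sheaf (m : M -> Prop) (X : Type) (act : X -> M -> X) : Prop :=
  forall a, in_F m a ->
    (forall x x', (forall s : {y : M | a y}, act x (proj1_sig s) = act x' (proj1_sig s)) -> x = x') /\
    (forall f, is_hom_from a X act f ->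
       exists x, forall s : {y : M | a y}, f s = act x (proj1_sig s)).

Definition Me (e : M) : Type := {a : M | exists k, a = mmul k e}.

Lemma Me_lmul_proof (e : M) (n : M) (a : Me e) :
  exists k, mmul n (proj1_sig a) = mmul k e.
Proof.
  destruct a as [a [k ->]]; simpl. exists (mmul n k). apply mmulA.
Qed.

Definition Me_lmul (e : M) (n : M) (a : Me e) : Me e :=
  exist _ (mmul n (proj1_sig a)) (Me_lmul_proof e n a).

(* p_*(S) = Hom_Sets(Me, S), with right action (alpha n)(a) = alpha(n a) *)
Definition pstar (e : M) (S : Type) : Type := Me e -> S.
Definition pstar_act (e : M) (S : Type) (alpha : pstar e S) (n : M) : pstar e S :=
  fun a => alpha (Me_lmul e n a).

Definition pitchfork_Sh (e : M) (m : M -> Prop) : Prop :=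
  forall S : Type, is_sheaf m (pstar e S) (pstar_act e S).

End Defs.

From Stdlib Require Import FunctionalExtensionality PropExtensionality ProofIrrelevance.

(* The sheaf condition for a covering right ideal a splits into
   separation (restriction to a is injective) and gluing (every M-map a -> X
   is a restriction).  For X = p_*(S) = (Me -> S) both hold as soon as every
   element of Me lies in a: an element k e of Me then serves as a "point" of
   a, and since (k e) e = k e (e idempotent), evaluating at the generator e
   recovers alpha from its restriction and produces the glued element.
   - If e lies in m, then Me = M e lies in the left ideal m, hence in every
     a in F_m, so every p_*(S) is a sheaf.
   - Conversely, separation for a = m on p_*(Prop) forces e in m: the maps
     b |-> (b = e) and b |-> (b = e /\ e in m) agree after multiplying by any
     y in m (as y c = e puts e in the right ideal m), so they are equal, and
     evaluating at e gives e in m. *)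

Section PointSheaf.
Variable M : Monoid.

Definition separated_for (a : M -> Prop) (X : Type) (act : X -> M -> X) : Prop :=
  forall x x', (forall s : {y : M | a y}, act x (proj1_sig s) = act x' (proj1_sig s)) ->
    x = x'.

Definition glues_for (a : M -> Prop) (X : Type) (act : X -> M -> X) : Prop :=
  forall f, is_hom_from M a X act f ->
    exists x, forall s : {y : M | a y}, f s = act x (proj1_sig s).

Variable e : M.

Lemma Me_ext (b c : Me M e) : proj1_sig b = proj1_sig c -> b = c.
Proof.
  destruct b as [b pb], c as [c pc]; simpl; intros ->.
  f_equal; apply proof_irrelevance.
Qed.

Definition Me_gen : Me M e := exist _ e (ex_intro _ mone (eq_sym (mmul1l M e))).

Lemma Me_in_left_ideal (l : M -> Prop) :
  left_ideal M l -> l e -> forall b : Me M e, l (proj1_sig b).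
Proof. intros hl le [b [k ->]]; apply hl, le. Qed.

Lemma separated_pstar_Prop_gen (a : M -> Prop) :
  right_ideal M a -> separated_for a (pstar M e Prop) (pstar_act M e Prop) -> a e.
Proof.
  intros ha hsep.
  assert (Hagree : (fun b : Me M e => proj1_sig b = e) =
                   (fun b => proj1_sig b = e /\ a e)).
  { apply hsep; intros [y ay]; simpl.
    apply functional_extensionality; intros c.
    unfold pstar_act, Me_lmul; simpl.
    apply propositional_extensionality; split; [|tauto].
    intros Hyc; split; [exact Hyc|].
    rewrite <- Hyc; apply ha, ay. }
  assert (Hgen := f_equal (fun g => g Me_gen) Hagree); simpl in Hgen.
  assert (Hrefl : e = e) by reflexivity.
  rewrite Hgen in Hrefl; tauto.
Qed.

Hypothesis he : idempotent M e.

Lemma Me_lmul_gen (b : Me M e) : Me_lmul M e (proj1_sig b) Me_gen = b.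
Proof.
  apply Me_ext; destruct b as [b [k ->]]; simpl.
  rewrite <- mmulA, he; reflexivity.
Qed.

Section CoveringIdeal.
Variables (a : M -> Prop) (S : Type).
Hypothesis a_covers_Me : forall b : Me M e, a (proj1_sig b).

Definition Me_point (b : Me M e) : {y : M | a y} := exist _ (proj1_sig b) (a_covers_Me b).

(* Separation: alpha is recovered as b |-> (alpha b)(e). *)
Lemma pstar_separated : separated_for a (pstar M e S) (pstar_act M e S).
Proof.
  intros x x' hx; apply functional_extensionality; intros b.
  assert (Hb := f_equal (fun g => g Me_gen) (hx (Me_point b))).
  unfold pstar_act in Hb; simpl in Hb.
  rewrite Me_lmul_gen in Hb; exact Hb.
Qed.

Lemma pstar_glues : glues_for a (pstar M e S) (pstar_act M e S).
Proof.
  intros f hf; exists (fun b => f (Me_point b) Me_gen).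
  intros [s ps]; simpl; apply functional_extensionality; intros c.
  transitivity (pstar_act M e S (f (exist _ s ps)) (proj1_sig c) Me_gen).
  - unfold pstar_act; rewrite Me_lmul_gen; reflexivity.
  - exact (f_equal (fun g => g Me_gen) (eq_sym (hf s ps (proj1_sig c) _))).
Qed.

End CoveringIdeal.
End PointSheaf.

Theorem lemma4p5 (M : Monoid) (e : M) (m : M -> Prop)
  (he : idempotent M e) (hm : two_sided_ideal M m)
  (hm2 : forall z, m z <-> sqset M m z) :
  pitchfork_Sh M e m <-> m e.
Proof.
  destruct hm as [hr hl]; split.
  - intros hsh.
    apply separated_pstar_Prop_gen; [exact hr|].
    exact (proj1 (hsh Prop m (conj hr (fun z hz => hz)))).
  - intros me S a [_ am].
    assert (cover : forall b : Me M e, a (proj1_sig b))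
      by (intros b; apply am, (Me_in_left_ideal M e m hl me)).
    split; [apply pstar_separated | apply pstar_glues]; assumption.
Qed.
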